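(* Let $G_m$ be a bounded Vilenkin group. There is a constant $c$ depending only on $m$ such that the following holds. Let $N\in P_+$, $0\le k\le N-1$, $k+1\le l\le N$, and $x\in I_N^{k,l}$. Then for every integer $n\ge M_N$, $$\int_{I_N}|K_n(x-t)|\,d\mu(t)\le \frac{c\,M_lM_k}{M_N^2}.$$
   Context: Let $m=(m_0,m_1,\dots)$ be integers $m_k\ge2$ with $\sup_km_k<\infty$. $G_m=\prod_k Z_{m_k}$ ($Z_{m_k}=\{0,\dots,m_k-1\}$ with addition mod $m_k$) with the product of uniform probability measures $\mu$; $x-t$ is coordinatewise subtraction mod $m_k$. $M_0=1$, $M_{k+1}=m_kM_k$; every $n\in\mathbb N$ is written uniquely as $n=\sum_jn_jM_j$, $n_j\in Z_{m_j}$. $r_k(x)=\exp(2\pi ix_k/m_k)$, $\psi_n=\prod_kr_k^{n_k}$. Dirichlet kernel $D_n=\sum_{k=0}^{n-1}\psi_k$, Fejér kernel $K_n=\frac1n\sum_{k=0}^{n-1}D_k$ ($n\ge1$). $I_N=\{y\in G_m: y_0=\dots=y_{N-1}=0\}$. For $0\le k<l<N$, $I_N^{k,l}$ is the set of $x\in G_m$ with $x_j=0$ for $j<k$, $x_k\ne0$, $x_j=0$ for $k<j<l$, $x_l\neq0$, and $x_{l+1},\dots,x_{N-1}$ (and all later coordinates) arbitrary; for $l=N$, $I_N^{k,N}$ is the set of $x$ with $x_j=0$ for $j<N$, $j\ne k$, and $x_k\neq0$ (later coordinates arbitrary). *)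

From Stdlib Require Import Reals Arith.
Open Scope R_scope.

Fixpoint rsum (n : nat) (g : nat -> R) : R :=
  match n with
  | O => 0
  | S n' => rsum n' g + g n'
  end.

Fixpoint Mk (m : nat -> nat) (k : nat) : nat :=
  match k with
  | O => 1%nat
  | S k' => (m k' * Mk m k')%nat
  end.

Definition digit (m : nat -> nat) (n j : nat) : nat :=
  ((n / Mk m j) mod (m j))%nat.

Definition inG (m : nat -> nat) (x : nat -> nat) : Prop :=
  forall j, (x j < m j)%nat.

Definition vsub (m : nat -> nat) (x t : nat -> nat) : nat -> nat :=
  fun j => ((x j + (m j - t j)) mod (m j))%nat.

(* psi_n(y) = prod_j r_j(y)^{n_j} = exp(i * phase n y), where
   r_j(y) = exp(2 pi i y_j / m_j).  Only digits n_j with j < n can be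
   nonzero (as M_j >= 2^j > j when all m_j >= 2), so the product is
   over j < n. *)
Definition phase (m : nat -> nat) (n : nat) (y : nat -> nat) : R :=
  rsum n (fun j => 2 * PI * INR (digit m n j) * INR (y j) / INR (m j)).

(* Real and imaginary parts of D_q(y) = sum_{k<q} psi_k(y) *)
Definition ReD (m : nat -> nat) (q : nat) (y : nat -> nat) : R :=
  rsum q (fun k => cos (phase m k y)).
Definition ImD (m : nat -> nat) (q : nat) (y : nat -> nat) : R :=
  rsum q (fun k => sin (phase m k y)).

(* Real and imaginary parts of K_n = (1/n) sum_{q<n} D_q *)
Definition ReK (m : nat -> nat) (n : nat) (y : nat -> nat) : R :=
  / INR n * rsum n (fun q => ReD m q y).
Definition ImK (m : nat -> nat) (n : nat) (y : nat -> nat) : R :=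
  / INR n * rsum n (fun q => ImD m q y).

Definition absK (m : nat -> nat) (n : nat) (y : nat -> nat) : R :=
  sqrt (ReK m n y ^ 2 + ImK m n y ^ 2).

(* Sum over all values t_j in Z_{m_j} of the coordinates j = lo, ..., lo+len-1,
   all other coordinates being 0. *)
Fixpoint csum (m : nat -> nat) (lo len : nat) (f : (nat -> nat) -> R) : R :=
  match len with
  | O => f (fun _ => 0%nat)
  | S len' =>
      rsum (m lo) (fun a =>
        csum m (S lo) len' (fun t => f (fun i => if Nat.eqb i lo then a else t i)))
  end.

(* Integral over I_N (w.r.t. the Haar/product measure mu) of a function f
   depending only on the coordinates j < L (with N <= L):
   I_N is the disjoint union of the cosets {t_j fixed for j < L}, each of
   measure 1/M_L, with t_j = 0 for j < N. *)
Definition int_IN (m : nat -> nat) (N L : nat) (f : (nat -> nat) -> R) : R :=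
  / INR (Mk m L) * csum m N (L - N) f.

Definition in_INkl (N k l : nat) (x : nat -> nat) : Prop :=
  if Nat.eqb l N then
    (forall j, (j < N)%nat -> j <> k -> x j = 0%nat) /\ x k <> 0%nat
  else
    (forall j, (j < k)%nat -> x j = 0%nat) /\ x k <> 0%nat /\
    (forall j, (k < j)%nat -> (j < l)%nat -> x j = 0%nat) /\ x l <> 0%nat.

(* Put y = x - t with t in I_N; then y agrees with x below N, so y_k <> 0 and,
   when l < N, also y_l <> 0.  A full period of a nontrivial character r_j sums
   to 0, and q |-> D_q(y) is quasi-periodic: D_{a M_j + r} = psi_{a M_j} D_r for
   j > k, r <= M_j.  Taking j = k+1 gives |D_q(y)| <= M_{k+1} <= (sup m) M_k,
   which settles l = N since then |K_n(y)| <= M_{k+1}.  For l < N write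
   n = C M_l + E; the same quasi-periodicity gives
   n K_n(y) = (sum_{c<C} psi_{c M_l}(y)) (sum_{d<M_l} D_d(y)) + psi_{C M_l}(y) sum_{d<E} D_d(y),
   and the first factor is at most m_l because full periods of r_l cancel.  So
   |K_n(y)| <= B (B+1) M_l M_k / M_N on x - I_N, with B = sup m, and I_N has
   measure 1/M_N. *)

From Stdlib Require Import Reals Arith Lia Lra.
From Coquelicot Require Import Complex.
Open Scope R_scope.

Fixpoint sumC (n : nat) (g : nat -> C) : C :=
  match n with O => 0%C | S n' => (sumC n' g + g n')%C end.

Lemma sumC_ext n (f g : nat -> C) :
  (forall i, (i < n)%nat -> f i = g i) -> sumC n f = sumC n g.
Proof.
induction n as [|n IH]; intros H; simpl; auto.
rewrite IH by (intros; apply H; lia). rewrite H by lia. reflexivity.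
Qed.

Lemma sumC_add a b (g : nat -> C) :
  sumC (a + b) g = (sumC a g + sumC b (fun i => g (a + i)%nat))%C.
Proof.
induction b as [|b IH]; simpl.
- rewrite Nat.add_0_r. ring.
- rewrite Nat.add_succ_r. simpl. rewrite IH. ring.
Qed.

Lemma sumC_mull z n (g : nat -> C) : sumC n (fun i => z * g i)%C = (z * sumC n g)%C.
Proof. induction n as [|n IH]; simpl; [ring | rewrite IH; ring]. Qed.

Lemma sumC_norm_le n (g : nat -> C) b :
  (forall i, (i < n)%nat -> Cmod (g i) <= b) -> Cmod (sumC n g) <= INR n * b.
Proof.
induction n as [|n IH]; intros H; cbn [sumC].
- rewrite Cmod_0. simpl. lra.
- eapply Rle_trans; [apply Cmod_triangle|].
  rewrite S_INR. specialize (IH ltac:(intros; apply H; lia)).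
  specialize (H n ltac:(lia)). lra.
Qed.

Lemma fst_sumC n (g : nat -> C) : fst (sumC n g) = rsum n (fun i => fst (g i)).
Proof. induction n as [|n IH]; simpl; auto. rewrite IH. reflexivity. Qed.

Lemma snd_sumC n (g : nat -> C) : snd (sumC n g) = rsum n (fun i => snd (g i)).
Proof. induction n as [|n IH]; simpl; auto. rewrite IH. reflexivity. Qed.

Lemma sumC_quasiperiodic (P a r : nat) (g h : nat -> C) :
  (r <= P)%nat -> (forall u v, (v < P)%nat -> g (u * P + v)%nat = (h u * g v)%C) ->
  sumC (a * P + r) g = (sumC a h * sumC P g + h a * sumC r g)%C.
Proof.
intros Hr Hg. rewrite sumC_add. f_equal.
- induction a as [|a IH]; [simpl; ring|].
  replace (S a * P)%nat with (a * P + P)%nat by lia.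
  rewrite sumC_add, IH. cbn [sumC].
  rewrite (sumC_ext P (fun i => g (a * P + i)%nat) (fun i => h a * g i)%C) by (intros; apply Hg; lia).
  rewrite sumC_mull. ring.
- rewrite <- sumC_mull. apply sumC_ext. intros; apply Hg; lia.
Qed.

Definition expi (t : R) : C := (cos t, sin t).

Lemma expi_add a b : expi (a + b) = (expi a * expi b)%C.
Proof. unfold expi. rewrite cos_plus, sin_plus. unfold Cmult; simpl. f_equal; ring. Qed.

Lemma Cmod_expi t : Cmod (expi t) = 1.
Proof.
unfold Cmod, expi; simpl. rewrite !Rmult_1_r, <- sqrt_1. f_equal.
pose proof (sin2_cos2 t) as H. unfold Rsqr in H. lra.
Qed.

Lemma expi_2kPI k : expi (2 * INR k * PI) = 1%C.
Proof.
unfold expi. replace (2 * INR k * PI) with (0 + 2 * INR k * PI) by ring.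
rewrite cos_period, sin_period, cos_0, sin_0. reflexivity.
Qed.

Lemma expi_neq1 t : 0 < t < 2 * PI -> expi t <> 1%C.
Proof.
intros [H0 H2] E. unfold expi in E. injection E as Ec Es.
destruct (Rtotal_order t PI) as [H|[H|H]].
- pose proof (sin_gt_0 t H0 H). lra.
- subst. rewrite cos_PI in Ec. lra.
- pose proof (sin_lt_0 t H H2). lra.
Qed.

Lemma expi_geometric t n :
  ((expi t - 1) * sumC n (fun c => expi (INR c * t)))%C = (expi (INR n * t) - 1)%C.
Proof.
induction n as [|n IH]; cbn [sumC].
- rewrite Rmult_0_l. replace (expi 0) with (RtoC 1) by (unfold expi; rewrite cos_0, sin_0; reflexivity).
  ring.
- rewrite Cmult_plus_distr_l, IH, S_INR.
  replace ((INR n + 1) * t) with (INR n * t + t) by ring. rewrite expi_add. ring.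
Qed.

Lemma sumC_expi_root n t :
  expi t <> 1%C -> expi (INR n * t) = 1%C -> sumC n (fun c => expi (INR c * t)) = 0%C.
Proof.
intros Ht Hn. pose proof (expi_geometric t n) as G.
rewrite Hn in G. unfold Cminus in G. rewrite Cplus_opp_r in G.
destruct (Ceq_dec (sumC n (fun c => expi (INR c * t))) 0) as [E|E]; auto.
assert (Ht' : (expi t - 1)%C <> 0%C) by (intro X; apply Ht; rewrite <- (Cplus_0_l 1), <- X; ring).
destruct (Cmult_neq_0 _ _ Ht' E G).
Qed.

Lemma rsum_ext n f g : (forall i, (i < n)%nat -> f i = g i) -> rsum n f = rsum n g.
Proof.
induction n as [|n IH]; intros H; simpl; auto.
rewrite IH by (intros; apply H; lia). rewrite H by lia. reflexivity.
Qed.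

Lemma rsum_plus n f g : rsum n (fun i => f i + g i) = rsum n f + rsum n g.
Proof. induction n as [|n IH]; simpl; [ring | rewrite IH; ring]. Qed.

Lemma rsum_zero n g : (forall i, (i < n)%nat -> g i = 0) -> rsum n g = 0.
Proof.
induction n as [|n IH]; intros H; simpl; auto.
rewrite IH by (intros; apply H; lia). rewrite H by lia. ring.
Qed.

Lemma rsum_single n g j :
  (j < n)%nat -> (forall i, (i < n)%nat -> i <> j -> g i = 0) -> rsum n g = g j.
Proof.
induction n as [|n IH]; intros Hj H; [lia|]. simpl.
destruct (Nat.eq_dec j n) as [->|Hjn].
- rewrite rsum_zero by (intros; apply H; lia). ring.
- rewrite IH by (try intros; try apply H; lia). rewrite (H n) by lia. ring.
Qed.

Lemma rsum_le n f g : (forall i, (i < n)%nat -> f i <= g i) -> rsum n f <= rsum n g.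
Proof.
induction n as [|n IH]; intros H; simpl; [lra|].
apply Rplus_le_compat; [apply IH; intros|]; apply H; lia.
Qed.

Lemma rsum_const n c : rsum n (fun _ => c) = INR n * c.
Proof. induction n as [|n IH]; [simpl; ring | cbn [rsum]; rewrite IH, S_INR; ring]. Qed.

Section Vilenkin.

Variable m : nat -> nat.
Hypothesis hm2 : forall j, (2 <= m j)%nat.

Lemma Mk_pos j : (0 < Mk m j)%nat.
Proof. induction j as [|j IH]; simpl; [lia|]. specialize (hm2 j). nia. Qed.

Lemma Mk_gt j : (j < Mk m j)%nat.
Proof. induction j as [|j IH]; simpl; [lia|]. specialize (hm2 j). nia. Qed.

Lemma Mk_divide j i : (j <= i)%nat -> Nat.divide (Mk m j) (Mk m i).
Proof.
intros H. replace i with (j + (i - j))%nat by lia.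
induction (i - j)%nat as [|d IH].
- rewrite Nat.add_0_r. apply Nat.divide_refl.
- rewrite Nat.add_succ_r. simpl. now apply Nat.divide_mul_r.
Qed.

Lemma Mk_le j i : (j <= i)%nat -> (Mk m j <= Mk m i)%nat.
Proof. intros H. apply Nat.divide_pos_le; [apply Mk_pos | now apply Mk_divide]. Qed.

Lemma digit_small q i : (q < Mk m i)%nat -> digit m q i = 0%nat.
Proof. intros H. unfold digit. rewrite Nat.div_small by exact H. apply Nat.Div0.mod_0_l. Qed.

Lemma digit_add_low a b j i : (i < j)%nat -> digit m (a * Mk m j + b) i = digit m b i.
Proof.
intros H. destruct (Mk_divide (S i) j H) as [R HR]. simpl in HR.
pose proof (Mk_pos i). unfold digit. rewrite HR.
replace (a * (R * (m i * Mk m i)) + b)%nat with (b + (a * R * m i) * Mk m i)%nat by ring.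
rewrite Nat.div_add by lia. apply Nat.Div0.mod_add.
Qed.

Lemma digit_mul_low a j i : (i < j)%nat -> digit m (a * Mk m j) i = 0%nat.
Proof.
intros H. rewrite <- (Nat.add_0_r (a * Mk m j)), digit_add_low by exact H.
apply digit_small, Mk_pos.
Qed.

Lemma digit_add_high a b j i :
  (b < Mk m j)%nat -> (j <= i)%nat -> digit m (a * Mk m j + b) i = digit m (a * Mk m j) i.
Proof.
intros Hb H. destruct (Mk_divide j i H) as [R HR]. pose proof (Mk_pos j).
unfold digit. rewrite HR, (Nat.mul_comm R), <- !Nat.Div0.div_div.
rewrite Nat.div_add_l, Nat.div_mul, (Nat.div_small b) by lia. now rewrite Nat.add_0_r.
Qed.

Definition phase_term (q : nat) (y : nat -> nat) (j : nat) : R :=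
  2 * PI * INR (digit m q j) * INR (y j) / INR (m j).

Lemma phase_term_digit0 q y j : digit m q j = 0%nat -> phase_term q y j = 0.
Proof. intros H. unfold phase_term. rewrite H. simpl. lra. Qed.

(* Only the digits below [q] can be nonzero, so the sum defining [phase] may be extended. *)
Lemma phase_eq_rsum q y K : (q <= K)%nat -> phase m q y = rsum K (phase_term q y).
Proof.
intros H. replace K with (q + (K - q))%nat by lia.
induction (K - q)%nat as [|d IH].
- now rewrite Nat.add_0_r.
- rewrite Nat.add_succ_r. cbn [rsum]. rewrite <- IH, phase_term_digit0; [ring|].
  apply digit_small. pose proof (Mk_gt (q + d)). lia.
Qed.

Lemma phase_split a j b y :
  (b < Mk m j)%nat -> phase m (a * Mk m j + b) y = phase m (a * Mk m j) y + phase m b y.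
Proof.
intros Hb. set (K := (a * Mk m j + b)%nat).
rewrite !(phase_eq_rsum _ y K) by (unfold K; lia). rewrite <- rsum_plus.
apply rsum_ext. intros i _. unfold phase_term, K.
destruct (Nat.lt_ge_cases i j).
- rewrite digit_add_low, digit_mul_low by exact H. simpl. lra.
- rewrite digit_add_high, (digit_small b i) by (try pose proof (Mk_le j i H); lia).
  simpl. lra.
Qed.

Lemma phase_single c j y :
  (c < m j)%nat -> phase m (c * Mk m j) y = 2 * PI * INR c * INR (y j) / INR (m j).
Proof.
intros Hc. pose proof (Mk_pos j).
rewrite (phase_eq_rsum _ y (c * Mk m j + S j)) by lia.
rewrite (rsum_single _ _ j); [| lia |].
- unfold phase_term, digit. rewrite Nat.div_mul, Nat.mod_small by lia. reflexivity.
- intros i _ Hij. apply phase_term_digit0.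
  destruct (Nat.lt_ge_cases i j).
  + now apply digit_mul_low.
  + apply digit_small. pose proof (Mk_le (S j) i ltac:(lia)). simpl in *. nia.
Qed.

(* [psi q y], [dirichlet q y] and [fejer_sum n y] are psi_q(y), D_q(y) and n K_n(y). *)
Definition psi (q : nat) (y : nat -> nat) : C := expi (phase m q y).
Definition dirichlet (q : nat) (y : nat -> nat) : C := sumC q (fun p => psi p y).
Definition fejer_sum (n : nat) (y : nat -> nat) : C := sumC n (fun q => dirichlet q y).

Lemma Cmod_psi q y : Cmod (psi q y) = 1.
Proof. apply Cmod_expi. Qed.

Lemma psi_split a j b y :
  (b < Mk m j)%nat -> psi (a * Mk m j + b) y = (psi (a * Mk m j) y * psi b y)%C.
Proof. intros H. unfold psi. rewrite phase_split by exact H. apply expi_add. Qed.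

Lemma psi_mul_Mk_split u v j y :
  (v < m j)%nat -> psi ((u * m j + v) * Mk m j) y = (psi (u * Mk m (S j)) y * psi (v * Mk m j) y)%C.
Proof.
intros Hv. rewrite <- psi_split.
- f_equal. simpl. ring.
- simpl. pose proof (Mk_pos j). nia.
Qed.

Lemma sumC_psi_period j y :
  (0 < y j < m j)%nat -> sumC (m j) (fun c => psi (c * Mk m j) y) = 0%C.
Proof.
intros [Hy0 Hy]. pose proof (hm2 j). pose proof PI_RGT_0.
assert (Hm : 0 < INR (m j)) by (apply lt_0_INR; lia).
set (t := 2 * PI * INR (y j) / INR (m j)).
rewrite (sumC_ext _ _ (fun c => expi (INR c * t))).
2:{ intros c Hc. unfold psi. rewrite phase_single by exact Hc. f_equal. unfold t. field. lra. }
apply sumC_expi_root.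
- apply expi_neq1. apply lt_INR in Hy0, Hy. simpl in Hy0. unfold t. split.
  + apply Rdiv_lt_0_compat; nra.
  + apply Rmult_lt_reg_r with (INR (m j)); auto. unfold Rdiv.
    rewrite Rmult_assoc, Rinv_l by lra. nra.
- replace (INR (m j) * t) with (2 * INR (y j) * PI) by (unfold t; field; lra).
  apply expi_2kPI.
Qed.

Section Nonzero_digit.

Variables (k : nat) (y : nat -> nat).
Hypothesis hyk : (0 < y k < m k)%nat.

(* D_{M_(k+1)} = D_(M_k) * (sum of a full period of r_k). *)
Lemma dirichlet_Mk_succ : dirichlet (Mk m (S k)) y = 0%C.
Proof.
unfold dirichlet. replace (Mk m (S k)) with (m k * Mk m k + 0)%nat by (simpl; lia).
rewrite (sumC_quasiperiodic _ _ _ _ (fun u => psi (u * Mk m k) y)).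
- rewrite sumC_psi_period by exact hyk. cbn [sumC]. ring.
- lia.
- intros u v Hv. now apply psi_split.
Qed.

Lemma dirichlet_Mk : forall j, (k < j)%nat -> dirichlet (Mk m j) y = 0%C.
Proof.
intros j Hj. destruct (Mk_divide (S k) j Hj) as [c Hc]. rewrite Hc, <- (Nat.add_0_r (c * _)).
unfold dirichlet. rewrite (sumC_quasiperiodic _ _ _ _ (fun u => psi (u * Mk m (S k)) y)).
- fold (dirichlet (Mk m (S k)) y). rewrite dirichlet_Mk_succ. cbn [sumC]. ring.
- lia.
- intros u v Hv. now apply psi_split.
Qed.

Lemma dirichlet_shift j a r :
  (k < j)%nat -> (r <= Mk m j)%nat ->
  dirichlet (a * Mk m j + r) y = (psi (a * Mk m j) y * dirichlet r y)%C.
Proof.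
intros Hj Hr. unfold dirichlet.
rewrite (sumC_quasiperiodic _ _ _ _ (fun u => psi (u * Mk m j) y)).
- fold (dirichlet (Mk m j) y). rewrite dirichlet_Mk by exact Hj. ring.
- exact Hr.
- intros u v Hv. now apply psi_split.
Qed.

Lemma Cmod_dirichlet_le q : Cmod (dirichlet q y) <= INR q.
Proof.
rewrite <- (Rmult_1_r (INR q)). apply sumC_norm_le.
intros. rewrite Cmod_psi. lra.
Qed.

Lemma Cmod_dirichlet_le_Mk q : Cmod (dirichlet q y) <= INR (Mk m (S k)).
Proof.
pose proof (Mk_pos (S k)) as HP. pose proof (Nat.mod_upper_bound q (Mk m (S k)) ltac:(lia)).
rewrite (Nat.div_mod_eq q (Mk m (S k))), Nat.mul_comm, dirichlet_shift by lia.
rewrite Cmod_mult, Cmod_psi, Rmult_1_l.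
eapply Rle_trans; [apply Cmod_dirichlet_le | apply le_INR; lia].
Qed.

Lemma Cmod_fejer_sum_le n : Cmod (fejer_sum n y) <= INR n * INR (Mk m (S k)).
Proof. apply sumC_norm_le. intros. apply Cmod_dirichlet_le_Mk. Qed.

Lemma fejer_sum_split l c e :
  (k < l)%nat -> (e <= Mk m l)%nat ->
  fejer_sum (c * Mk m l + e) y =
  (sumC c (fun u => psi (u * Mk m l) y) * fejer_sum (Mk m l) y
   + psi (c * Mk m l) y * fejer_sum e y)%C.
Proof.
intros Hl He. apply sumC_quasiperiodic; [exact He|].
intros u v Hv. apply dirichlet_shift; lia.
Qed.

End Nonzero_digit.

Lemma Cmod_sumC_psi_le l c y :
  (0 < y l < m l)%nat -> Cmod (sumC c (fun u => psi (u * Mk m l) y)) <= INR (m l).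
Proof.
intros Hyl. pose proof (hm2 l). pose proof (Nat.mod_upper_bound c (m l) ltac:(lia)).
rewrite (Nat.div_mod_eq c (m l)), Nat.mul_comm.
rewrite (sumC_quasiperiodic _ _ _ _ (fun u => psi (u * Mk m (S l)) y)).
- rewrite sumC_psi_period by exact Hyl. rewrite Cmult_0_r, Cplus_0_l, Cmod_mult, Cmod_psi, Rmult_1_l.
  rewrite <- (Rmult_1_r (INR (m l))). eapply Rle_trans.
  + apply sumC_norm_le. intros. rewrite Cmod_psi. apply Rle_refl.
  + apply Rmult_le_compat_r; [lra | apply le_INR; lia].
- lia.
- intros u v Hv. now apply psi_mul_Mk_split.
Qed.

Lemma Cmod_fejer_sum_le_period k l n y :
  (k < l)%nat -> (0 < y k < m k)%nat -> (0 < y l < m l)%nat ->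
  Cmod (fejer_sum n y) <= (INR (m l) + 1) * INR (Mk m l) * INR (Mk m (S k)).
Proof.
intros Hkl Hyk Hyl. pose proof (Mk_pos l).
pose proof (Nat.mod_upper_bound n (Mk m l) ltac:(lia)) as He.
rewrite (Nat.div_mod_eq n (Mk m l)), Nat.mul_comm, (fejer_sum_split k) by (auto; lia).
eapply Rle_trans; [apply Cmod_triangle|]. rewrite !Cmod_mult, Cmod_psi, Rmult_1_l.
pose proof (Cmod_sumC_psi_le l (n / Mk m l) y Hyl) as HZ.
pose proof (Cmod_fejer_sum_le k y Hyk (Mk m l)) as HF.
pose proof (Cmod_fejer_sum_le k y Hyk (n mod Mk m l)) as HE.
apply lt_INR in He.
assert (0 <= INR (Mk m (S k))) by apply pos_INR.
assert (Cmod (sumC (n / Mk m l) (fun u => psi (u * Mk m l) y)) * Cmod (fejer_sum (Mk m l) y)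
        <= INR (m l) * (INR (Mk m l) * INR (Mk m (S k)))).
{ apply Rmult_le_compat; auto using Cmod_ge_0. }
nra.
Qed.

End Vilenkin.

Lemma absK_eq m n y :
  (0 < n)%nat -> absK m n y = / INR n * Cmod (fejer_sum m n y).
Proof.
intros Hn. transitivity (Cmod (RtoC (/ INR n) * fejer_sum m n y)).
- unfold absK, Cmod, ReK, ImK, ReD, ImD. f_equal. simpl.
  unfold fejer_sum. rewrite fst_sumC, snd_sumC.
  rewrite (rsum_ext n _ (fun q => fst (dirichlet m q y))),
          (rsum_ext n (fun q => rsum q _) (fun q => snd (dirichlet m q y))).
  + ring.
  + intros. unfold dirichlet. now rewrite snd_sumC.
  + intros. unfold dirichlet. now rewrite fst_sumC.
- rewrite Cmod_mult, Cmod_R, Rabs_pos_eq; [reflexivity|].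
  left. apply Rinv_0_lt_compat, lt_0_INR, Hn.
Qed.

Lemma absK_le m (hm2 : forall j, (2 <= m j)%nat) B (hB : forall j, (m j <= B)%nat) N k l n y :
  (k < l)%nat -> (l <= N)%nat -> (0 < y k < m k)%nat -> ((l < N)%nat -> (0 < y l < m l)%nat) ->
  (Mk m N <= n)%nat ->
  absK m n y <= (INR B + 1) * INR B * INR (Mk m l) * INR (Mk m k) / INR (Mk m N).
Proof.
intros Hkl HlN Hyk Hyl Hn. pose proof (Mk_pos m hm2 N) as HN.
rewrite absK_eq by lia.
assert (Hn' : 0 < INR (Mk m N) <= INR n) by (split; [apply lt_0_INR | apply le_INR]; lia).
assert (Hinv : 0 <= / INR n) by (left; apply Rinv_0_lt_compat; lra).
assert (HB : INR (m l) <= INR B) by (apply le_INR, hB).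
assert (HSk : INR (Mk m (S k)) <= INR B * INR (Mk m k)).
{ simpl. rewrite mult_INR. apply Rmult_le_compat_r; [apply pos_INR | apply le_INR, hB]. }
pose proof (pos_INR B). pose proof (pos_INR (Mk m k)). pose proof (pos_INR (Mk m l)).
destruct (Nat.lt_ge_cases l N) as [HlN'|HNl].
- eapply Rle_trans.
  { apply Rmult_le_compat_l; [exact Hinv|]. apply (Cmod_fejer_sum_le_period m hm2 k l); auto. }
  unfold Rdiv. rewrite Rmult_comm. apply Rmult_le_compat.
  + pose proof (pos_INR (m l)). pose proof (pos_INR (Mk m (S k))).
    apply Rmult_le_pos; [apply Rmult_le_pos|]; lra.
  + exact Hinv.
  + replace ((INR B + 1) * INR B * INR (Mk m l) * INR (Mk m k))
      with ((INR B + 1) * INR (Mk m l) * (INR B * INR (Mk m k))) by ring.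
    pose proof (pos_INR (Mk m (S k))). pose proof (pos_INR (m l)).
    apply Rmult_le_compat; [nra | lra | apply Rmult_le_compat_r; lra | exact HSk].
  + apply Rinv_le_contravar; lra.
- replace l with N in * by lia.
  eapply Rle_trans.
  { apply Rmult_le_compat_l; [exact Hinv|]. apply (Cmod_fejer_sum_le m hm2 k y Hyk). }
  rewrite <- Rmult_assoc, Rinv_l, Rmult_1_l by lra.
  replace ((INR B + 1) * INR B * INR (Mk m N) * INR (Mk m k) / INR (Mk m N))
    with ((INR B + 1) * (INR B * INR (Mk m k))) by (field; lra).
  nra.
Qed.

Fixpoint mprod (m : nat -> nat) (lo len : nat) : nat :=
  match len with O => 1%nat | S len' => (m lo * mprod m (S lo) len')%nat end.

Lemma Mk_add_mprod m len : forall lo, Mk m (lo + len) = (Mk m lo * mprod m lo len)%nat.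
Proof.
induction len as [|len IH]; intros lo; simpl.
- rewrite Nat.add_0_r. lia.
- rewrite Nat.add_succ_r, <- Nat.add_succ_l, IH. simpl. ring.
Qed.

Lemma csum_le m len : forall lo f c,
  (forall t, (forall i, (i < lo)%nat -> t i = 0%nat) -> f t <= c) ->
  csum m lo len f <= INR (mprod m lo len) * c.
Proof.
induction len as [|len IH]; intros lo f c H; cbn [csum mprod].
- rewrite Rmult_1_l. now apply H.
- eapply Rle_trans.
  + apply rsum_le with (g := fun _ => INR (mprod m (S lo) len) * c).
    intros a _. apply IH. intros t Ht. apply H. intros i Hi.
    destruct (Nat.eqb_spec i lo); [lia | apply Ht; lia].
  + rewrite rsum_const, mult_INR. lra.
Qed.

Lemma int_IN_le m (hm2 : forall j, (2 <= m j)%nat) N L f c :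
  (N <= L)%nat -> (forall t, (forall i, (i < N)%nat -> t i = 0%nat) -> f t <= c) ->
  int_IN m N L f <= c / INR (Mk m N).
Proof.
intros HNL H. unfold int_IN.
pose proof (Mk_add_mprod m (L - N) N) as HP. replace (N + (L - N))%nat with L in HP by lia.
pose proof (Mk_pos m hm2 L). rewrite HP in *.
assert (0 < INR (Mk m N)) by (apply lt_0_INR; nia).
assert (0 < INR (mprod m N (L - N))) by (apply lt_0_INR; nia).
rewrite mult_INR. eapply Rle_trans.
- apply Rmult_le_compat_l; [left; apply Rinv_0_lt_compat; nra|]. apply csum_le, H.
- right. field. lra.
Qed.

Lemma vsub_low m x t i : (x i < m i)%nat -> t i = 0%nat -> vsub m x t i = x i.
Proof.
intros H Ht. unfold vsub. rewrite Ht, Nat.sub_0_r.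
replace (x i + m i)%nat with (x i + 1 * m i)%nat by lia.
rewrite Nat.Div0.mod_add. now apply Nat.mod_small.
Qed.

Lemma in_INkl_nonzero N k l x :
  (l <= N)%nat -> in_INkl N k l x -> x k <> 0%nat /\ ((l < N)%nat -> x l <> 0%nat).
Proof.
intros HlN. unfold in_INkl. destruct (Nat.eqb_spec l N) as [->|Hl].
- intros [_ Hk]. split; [exact Hk | lia].
- intros (_ & Hk & _ & Hl'). auto.
Qed.

Theorem lemma4 (m : nat -> nat)
  (hm2 : forall j, (2 <= m j)%nat)
  (hbdd : exists B, forall j, (m j <= B)%nat) :
  exists c : R,
    forall (N k l : nat) (x : nat -> nat),
      (1 <= N)%nat ->
      (k <= N - 1)%nat -> (k + 1 <= l)%nat -> (l <= N)%nat ->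
      inG m x -> in_INkl N k l x ->
      forall n : nat, (Mk m N <= n)%nat ->
      forall L : nat, (N <= L)%nat -> (n < Mk m L)%nat ->
        int_IN m N L (fun t => absK m n (vsub m x t))
          <= c * INR (Mk m l) * INR (Mk m k) / INR (Mk m N) ^ 2.
Proof.
destruct hbdd as [B hB]. exists ((INR B + 1) * INR B).
intros N k l x _ _ Hkl HlN Hx Hin n Hn L HNL _.
destruct (in_INkl_nonzero N k l x HlN Hin) as [Hxk Hxl].
eapply Rle_trans.
- apply (int_IN_le m hm2); [exact HNL|]. intros t Ht.
  assert (Hy : forall i, (i < N)%nat -> vsub m x t i = x i) by (intros; apply vsub_low; auto).
  apply (absK_le m hm2 B hB N k l); [lia | exact HlN | | | exact Hn].
  + rewrite Hy by lia. pose proof (Hx k). lia.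
  + intros HlN'. rewrite Hy by exact HlN'. pose proof (Hx l). specialize (Hxl HlN'). lia.
- pose proof (Mk_pos m hm2 N). assert (0 < INR (Mk m N)) by (apply lt_0_INR; lia).
  right. field. lra.
Qed.
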